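(* Let $n\ge1$, $E,m\ge1$, and let $F:\{0,1\}^n\to\mathbb{F}^E_m\cap[0,1]$ be nondecreasing with respect to the lexicographic order $<_{\mathrm{dict}}$ with $F(1^n)=1$. Let $P_F(b):=F(b)-F(b^-)$ for $b\in\{0,1\}^n$, where $b^-$ is the lexicographic predecessor of $b$ and $F((0^n)^-):=0$. Define $p_F:\{0,1\}^*\to[0,1]$ by $p_F(b):=F(b1^{n-|b|})-F((b0^{n-|b|})^-)$ for $|b|\le n$ (exact real subtraction), and $p_F(bb'):=p_F(b)\,\mathbf{1}[b'=0\ldots0]$ for $b\in\{0,1\}^n$ and nonempty $b'\in\{0,1\}^+$. Then $p_F$ is a binary-coded probability distribution and $p_F(b)=P_F(b)$ for all $b\in\{0,1\}^n$.
   Context: $\mathbb{F}^E_m\cap[0,1]$ denotes the set of real numbers in $[0,1]$ exactly representable as IEEE-754-style floating-point numbers with $E$ exponent bits and $m$ mantissa bits (subnormals included). A binary-coded probability distribution is a map $p:\{0,1\}^*\to[0,1]$ with $p(\varepsilon)=1$ and $p(b)=p(b0)+p(b1)$ for every finite binary string $b$ ($\varepsilon$ the empty string). *)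

From HB Require Import structures.
From mathcomp Require Import all_boot all_order all_algebra.
From mathcomp Require Import reals.
Set Implicit Arguments. Unset Strict Implicit. Unset Printing Implicit Defensive.
Import Order.TTheory GRing.Theory Num.Theory.
Local Open Scope ring_scope.

(* exponent bias 2^(E-1) - 1; biased exponent field in [0, 2^E - 1];
   field 2^E - 1 is reserved (inf/NaN); field 0 encodes zero/subnormals. *)
Definition float_bias (E : nat) : nat := (2 ^ E.-1).-1.
Definition float_emin (E : nat) : int := 1 - (float_bias E)%:Z.
Definition float_emax (E : nat) : int := (float_bias E)%:Z.

Definition is_float {R : realType} (E m : nat) (x : R) : Prop :=
  exists (s : bool) (f : nat), (f < 2 ^ m)%N /\
    (
      x = (-1) ^+ s * f%:R * (2%:R : R) ^ (float_emin E - m%:Z)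
    \/
      exists e : int, float_emin E <= e <= float_emax E /\
        x = (-1) ^+ s * (2 ^ m + f)%:R * (2%:R : R) ^ (e - m%:Z)).

Fixpoint lexlt (s t : seq bool) : bool :=
  match s, t with
  | x :: s', y :: t' => (~~ x && y) || ((x == y) && lexlt s' t')
  | _, _ => false
  end.
Definition lexle (s t : seq bool) : bool := (s == t) || lexlt s t.

(* F(b^-): value of F at the lexicographic predecessor of b,
   with the convention F((0^n)^-) := 0 (no predecessor). *)
Definition Fpred {R : realType} (n : nat) (F : n.-tuple bool -> R)
  (b : n.-tuple bool) : R :=
  match [pick c : n.-tuple bool | lexlt c b &&
           [forall d : n.-tuple bool, lexlt d b ==> lexle d c]] with
  | Some c => F c
  | None => 0
  end.

Definition PF {R : realType} (n : nat) (F : n.-tuple bool -> R)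
  (b : n.-tuple bool) : R := F b - Fpred F b.

Definition ext (n : nat) (b : seq bool) (x : bool) : n.-tuple bool :=
  insubd (nseq_tuple n x) (b ++ nseq (n - size b) x).

Definition pF {R : realType} (n : nat) (F : n.-tuple bool -> R)
  (b : seq bool) : R :=
  if (size b <= n)%N then F (ext n b true) - Fpred F (ext n b false)
  else if all (fun x => ~~ x) (drop n b) then
    F (ext n (take n b) true) - Fpred F (ext n (take n b) false)
  else 0.

Definition binary_distribution {R : realType} (p : seq bool -> R) : Prop :=
  (forall b, 0 <= p b <= 1) /\ p [::] = 1 /\
  (forall b, p b = p (rcons b false) + p (rcons b true)).

From HB Require Import structures.
From mathcomp Require Import all_boot all_order all_algebra.
From mathcomp Require Import reals.

Set Implicit Arguments.
Unset Strict Implicit.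
Unset Printing Implicit Defensive.
Import Order.TTheory GRing.Theory Num.Theory.
Local Open Scope ring_scope.

(* For |b| < n the strings b0 1^k and b1 0^k (k = n - |b| - 1) are lexicographic
   neighbours, so F(b01..1) - F((b00..0)^-) and F(b11..1) - F((b10..0)^-)
   telescope to p_F(b).  Beyond length n, p_F only copies the value on the
   length-n prefix onto the all-zero continuation, so mass is trivially
   conserved there. *)

Lemma lexlt_nseq_false (s : seq bool) k : lexlt s (nseq k false) = false.
Proof. by elim: s k => [|x s IH] [|k] //=; rewrite IH !andbF. Qed.

Lemma lexlt_asym (s t : seq bool) : lexlt s t -> ~~ lexlt t s.
Proof. by elim: s t => [|x s IH] [|y t] //=; case: x; case: y => //=; exact: IH. Qed.

Lemma lexle_cons x (s t : seq bool) : lexle (x :: s) (x :: t) = lexle s t.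
Proof. by rewrite /lexle /= eqseq_cons eqxx; case: x. Qed.

Lemma lexle_nseq_true (d : seq bool) k : size d = k -> lexle d (nseq k true).
Proof.
elim: d k => [|x d IH] [|k] //= [/IH]; case: x => [le_dk | _].
  by rewrite lexle_cons.
by rewrite /lexle /=.
Qed.

Lemma lexle_cat_nseq (b : seq bool) k : lexle (b ++ nseq k false) (b ++ nseq k true).
Proof.
elim: b => [|x b IH]; last by rewrite /= lexle_cons.
by case: k => [|k]; rewrite /lexle //= orbT.
Qed.

Lemma lexlt_flip (b : seq bool) k :
  lexlt (b ++ false :: nseq k true) (b ++ true :: nseq k false).
Proof. by elim: b => //= x b ->; rewrite eqxx orbT. Qed.

Lemma lexlt_flip_predecessor (b d : seq bool) k : size d = (size b + k.+1)%N ->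
  lexlt d (b ++ true :: nseq k false) -> lexle d (b ++ false :: nseq k true).
Proof.
elim: b d => [|y b IH] [|x d] //= [size_d].
  rewrite lexlt_nseq_false andbF orbF andbT => /negbTE ->.
  by rewrite lexle_cons; exact: lexle_nseq_true.
case/orP => [lt_yx | /andP [/eqP -> lt_bd]]; first by rewrite /lexle /= lt_yx orbT.
by rewrite lexle_cons; exact: IH.
Qed.

Lemma lexle_tuple_antisym n (c d : n.-tuple bool) : lexle c d -> lexle d c -> c = d.
Proof.
rewrite /lexle => /orP [/eqP/val_inj // | lt_cd] /orP [/eqP/val_inj // | lt_dc].
by have := lexlt_asym lt_cd; rewrite lt_dc.
Qed.

Section Predecessor.

Variables (R : realType) (n : nat) (F : n.-tuple bool -> R).

Lemma Fpred_eq (c t : n.-tuple bool) : lexlt c t ->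
  (forall d : n.-tuple bool, lexlt d t -> lexle d c) -> Fpred F t = F c.
Proof.
move=> lt_ct below_t; rewrite /Fpred; case: pickP => [c' /andP [lt_c't /forallP max_c'] | none].
  by rewrite (lexle_tuple_antisym (below_t _ lt_c't) (implyP (max_c' c) lt_ct)).
have := none c; rewrite lt_ct /=; move/negbT/negP; case.
by apply/forallP => d; apply/implyP; exact: below_t.
Qed.

Lemma Fpred_min (t : n.-tuple bool) :
  (forall d : n.-tuple bool, lexlt d t = false) -> Fpred F t = 0.
Proof. by move=> min_t; rewrite /Fpred; case: pickP => [c /andP []|//]; rewrite min_t. Qed.

Hypothesis F_ge0 : forall b, 0 <= F b.
Hypothesis F_mono : forall b c : n.-tuple bool, lexle b c -> F b <= F c.

Lemma Fpred_ge0 (t : n.-tuple bool) : 0 <= Fpred F t.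
Proof. by rewrite /Fpred; case: pickP. Qed.

Lemma Fpred_le (t : n.-tuple bool) : Fpred F t <= F t.
Proof.
rewrite /Fpred; case: pickP => [c /andP [lt_ct _] | _] //.
by apply: F_mono; rewrite /lexle lt_ct orbT.
Qed.

End Predecessor.

Lemma ext_val n (b : seq bool) x : (size b <= n)%N ->
  val (ext n b x) = b ++ nseq (n - size b) x.
Proof. by move=> le_bn; rewrite /ext val_insubd size_cat size_nseq subnKC // eqxx. Qed.

Lemma ext_tuple n (b : n.-tuple bool) x : ext n b x = b.
Proof. by apply: val_inj; rewrite ext_val ?size_tuple // subnn cats0. Qed.

Lemma ext_nil n x : ext n [::] x = nseq_tuple n x.
Proof. by apply: val_inj; rewrite ext_val //= subn0. Qed.

Lemma ext_rcons n (b : seq bool) x : (size b < n)%N -> ext n (rcons b x) x = ext n b x.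
Proof.
move=> lt_bn; apply: val_inj; rewrite !ext_val ?size_rcons ?(ltnW lt_bn) //.
by rewrite -(subnSK lt_bn) cat_rcons.
Qed.

Section BinaryDistribution.

Variables (R : realType) (n : nat) (F : n.-tuple bool -> R).

Lemma pF_short (b : seq bool) : (size b <= n)%N ->
  pF F b = F (ext n b true) - Fpred F (ext n b false).
Proof. by rewrite /pF => ->. Qed.

Lemma pF_long (b : seq bool) : (n <= size b)%N ->
  pF F b = if all (fun x => ~~ x) (drop n b) then pF F (take n b) else 0.
Proof.
move=> le_nb; have [le_bn | lt_nb] := leqP (size b) n.
  by rewrite drop_oversize // take_oversize.
by rewrite /pF (leqNgt (size b)) lt_nb /= size_take lt_nb leqnn.
Qed.

Lemma pF_tuple (b : n.-tuple bool) : pF F b = PF F b.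
Proof. by rewrite pF_short ?size_tuple // !ext_tuple. Qed.

Lemma pF_rcons_false (b : seq bool) : (n <= size b)%N -> pF F (rcons b false) = pF F b.
Proof.
move=> le_nb; rewrite (pF_long le_nb) pF_long ?size_rcons ?(leqW le_nb) //.
by rewrite drop_rcons // all_rcons -cats1 takel_cat.
Qed.

Lemma pF_rcons_true (b : seq bool) : (n <= size b)%N -> pF F (rcons b true) = 0.
Proof.
move=> le_nb; rewrite pF_long ?size_rcons ?(leqW le_nb) //.
by rewrite drop_rcons // all_rcons.
Qed.

Lemma pF_split_short (b : seq bool) : (size b < n)%N ->
  pF F b = pF F (rcons b false) + pF F (rcons b true).
Proof.
move=> lt_bn; rewrite !pF_short ?size_rcons ?(ltnW lt_bn) // !ext_rcons //.
have [k n_b] : exists k, (n - size b)%N = k.+1.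
  by exists (n - size b).-1; rewrite prednK ?subn_gt0.
have n_bS : (n - (size b).+1)%N = k by rewrite subnS n_b.
suff -> : Fpred F (ext n (rcons b true) false) = F (ext n (rcons b false) true).
  by rewrite [RHS]addrC addrA subrK.
apply: Fpred_eq; rewrite !ext_val ?size_rcons // n_bS !cat_rcons; first exact: lexlt_flip.
move=> d; apply: lexlt_flip_predecessor.
by rewrite size_tuple -n_b subnKC // ltnW.
Qed.

Hypothesis F_range : forall b, 0 <= F b <= 1.
Hypothesis F_mono : forall b c : n.-tuple bool, lexle b c -> F b <= F c.
Hypothesis F_top : F (nseq_tuple n true) = 1.

Let F_ge0 b : 0 <= F b. Proof. by case/andP: (F_range b). Qed.

Lemma pF_nil : pF F [::] = 1.
Proof.
rewrite pF_short // ext_nil F_top Fpred_min ?subr0 // => d.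
by rewrite ext_nil lexlt_nseq_false.
Qed.

Lemma pF_short_range (b : seq bool) : (size b <= n)%N -> 0 <= pF F b <= 1.
Proof.
move=> le_bn; rewrite pF_short // subr_ge0; apply/andP; split.
  apply: le_trans (Fpred_le F_ge0 F_mono _) (F_mono _).
  by rewrite !ext_val // lexle_cat_nseq.
have /andP [_ F_le1] := F_range (ext n b true).
by rewrite lerBlDr (le_trans F_le1) // lerDl Fpred_ge0.
Qed.

Lemma pF_range (b : seq bool) : 0 <= pF F b <= 1.
Proof.
have [le_bn | lt_nb] := leqP (size b) n; first exact: pF_short_range.
rewrite (pF_long (ltnW lt_nb)); case: ifP => _; last by rewrite lexx ler01.
by apply: pF_short_range; rewrite size_take lt_nb.
Qed.

Lemma pF_split (b : seq bool) : pF F b = pF F (rcons b false) + pF F (rcons b true).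
Proof.
have [le_nb | lt_bn] := leqP n (size b); last exact: pF_split_short.
by rewrite pF_rcons_false // pF_rcons_true // addr0.
Qed.

End BinaryDistribution.

(* Floating-point representability of the values plays no role in the argument. *)
Theorem proposition5p13 (R : realType) (n E m : nat)
  (F : n.-tuple bool -> R) :
  (1 <= n)%N -> (1 <= E)%N -> (1 <= m)%N ->
  (forall b, is_float E m (F b) /\ 0 <= F b <= 1) ->
  (forall b c : n.-tuple bool, lexle b c -> F b <= F c) ->
  F (nseq_tuple n true) = 1 ->
  binary_distribution (pF F) /\ (forall b : n.-tuple bool, pF F b = PF F b).
Proof.
move=> _ _ _ F_float F_mono F_top.
have F_range b : 0 <= F b <= 1 by case: (F_float b).
split; last exact: pF_tuple.
split; [exact: pF_range | split; [exact: pF_nil | exact: pF_split]].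
Qed.
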